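(* Let $A$ be a Banach algebra, $\phi\in\Delta(A)$, and $I$ a closed two-sided ideal of $A$ with $\phi|_I\neq0$. If $A$ is approximately left $\phi$-biprojective, then $I$ is approximately left $\phi|_I$-biprojective.
   Context: $\Delta(A)$ is the set of characters of $A$; $A\otimes_pA$ is the projective tensor product with $a\cdot(b\otimes c)=ab\otimes c$, $(b\otimes c)\cdot a=b\otimes ca$, $\pi_A(a\otimes b)=ab$. For a Banach algebra $A$ and $\phi\in\Delta(A)$, $A$ is approximately left $\phi$-biprojective if there is a net $(\rho_\alpha)$ of bounded linear maps $A\to A\otimes_pA$ such that for all $a,x\in A$: $\|a\cdot\rho_\alpha(x)-\rho_\alpha(ax)\|\to0$, $\|\rho_\alpha(xa)-\phi(a)\rho_\alpha(x)\|\to0$, and $\phi(\pi_A(\rho_\alpha(x)))-\phi(x)\to0$. *)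

From Stdlib Require Import Reals ClassicalEpsilon.
Open Scope R_scope.
Set Implicit Arguments.

Record Cplx := mkC { Cre : R; Cim : R }.
Definition C0 : Cplx := mkC 0 0.
Definition C1 : Cplx := mkC 1 0.
Definition Cadd (z w : Cplx) : Cplx := mkC (Cre z + Cre w) (Cim z + Cim w).
Definition Copp (z : Cplx) : Cplx := mkC (- Cre z) (- Cim z).
Definition Csub (z w : Cplx) : Cplx := Cadd z (Copp w).
Definition Cmul (z w : Cplx) : Cplx :=
  mkC (Cre z * Cre w - Cim z * Cim w) (Cre z * Cim w + Cim z * Cre w).
Definition Cnorm (z : Cplx) : R := sqrt (Cre z * Cre z + Cim z * Cim z).

Record BanachSpace := {
  bcar :> Type;
  bzero : bcar;
  badd : bcar -> bcar -> bcar;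
  bopp : bcar -> bcar;
  bscal : Cplx -> bcar -> bcar;
  bnorm : bcar -> R;
  badd_assoc : forall x y z, badd x (badd y z) = badd (badd x y) z;
  badd_comm : forall x y, badd x y = badd y x;
  badd_0 : forall x, badd bzero x = x;
  badd_opp : forall x, badd x (bopp x) = bzero;
  bscal_1 : forall x, bscal C1 x = x;
  bscal_assoc : forall a b x, bscal a (bscal b x) = bscal (Cmul a b) x;
  bscal_addv : forall a x y, bscal a (badd x y) = badd (bscal a x) (bscal a y);
  bscal_adds : forall a b x, bscal (Cadd a b) x = badd (bscal a x) (bscal b x);
  bnorm_eq0 : forall x, bnorm x = 0 -> x = bzero;
  bnorm_triangle : forall x y, bnorm (badd x y) <= bnorm x + bnorm y;
  bnorm_scal : forall a x, bnorm (bscal a x) = Cnorm a * bnorm x;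
  bcomplete : forall u : nat -> bcar,
    (forall eps, 0 < eps -> exists N, forall m n, (N <= m)%nat -> (N <= n)%nat ->
        bnorm (badd (u m) (bopp (u n))) < eps) ->
    exists l, forall eps, 0 < eps -> exists N, forall n, (N <= n)%nat ->
        bnorm (badd (u n) (bopp l)) < eps
}.
Arguments bzero {_}. Arguments badd {_}. Arguments bopp {_}.
Arguments bscal {_}. Arguments bnorm {_}.

Definition bsub {E : BanachSpace} (x y : E) : E := badd x (bopp y).

Definition seq_converges {E : BanachSpace} (u : nat -> E) (l : E) : Prop :=
  forall eps, 0 < eps -> exists N, forall n, (N <= n)%nat -> bnorm (bsub (u n) l) < eps.

Record BanachAlgebra := {
  bsp :> BanachSpace;
  bmul : bsp -> bsp -> bsp;
  bmul_assoc : forall x y z, bmul x (bmul y z) = bmul (bmul x y) z;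
  bmul_addl : forall x y z, bmul (badd x y) z = badd (bmul x z) (bmul y z);
  bmul_addr : forall x y z, bmul x (badd y z) = badd (bmul x y) (bmul x z);
  bmul_scall : forall a x y, bmul (bscal a x) y = bscal a (bmul x y);
  bmul_scalr : forall a x y, bmul x (bscal a y) = bscal a (bmul x y);
  bnorm_mul : forall x y, bnorm (bmul x y) <= bnorm x * bnorm y
}.
Arguments bmul {_}.

Definition is_linear {E F : BanachSpace} (f : E -> F) : Prop :=
  (forall x y, f (badd x y) = badd (f x) (f y)) /\
  (forall a x, f (bscal a x) = bscal a (f x)).

Definition bounded_linear {E F : BanachSpace} (f : E -> F) : Prop :=
  is_linear f /\ exists M, forall x, bnorm (f x) <= M * bnorm x.

Definition is_bilinear {E F G : BanachSpace} (b : E -> F -> G) : Prop :=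
  (forall y, is_linear (fun x => b x y)) /\ (forall x, is_linear (b x)).

(* ---------- projective tensor product, via its universal property ----------
   (T, tens) is the projective tensor product E (x)_p F iff tens is bilinear
   of norm <= 1 and L |-> L o tens is an isometric bijection between bounded
   linear maps T -> G and bounded bilinear maps E x F -> G, for every Banach G.
   This determines E (x)_p F up to isometric isomorphism. *)
Record PTensor (E F : BanachSpace) := {
  ptT :> BanachSpace;
  ptens : E -> F -> ptT;
  ptens_bilin : is_bilinear ptens;
  ptens_norm : forall x y, bnorm (ptens x y) <= bnorm x * bnorm y;
  ptens_univ : forall (G : BanachSpace) (b : E -> F -> G) (M : R),
    0 <= M -> is_bilinear b ->
    (forall x y, bnorm (b x y) <= M * bnorm x * bnorm y) ->
    exists L : ptT -> G, is_linear L /\ (forall t, bnorm (L t) <= M * bnorm t) /\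
      (forall x y, L (ptens x y) = b x y);
  ptens_uniq : forall (G : BanachSpace) (L1 L2 : ptT -> G),
    bounded_linear L1 -> bounded_linear L2 ->
    (forall x y, L1 (ptens x y) = L2 (ptens x y)) -> forall t, L1 t = L2 t
}.
Arguments ptens {_ _}.

Definition lact {A : BanachAlgebra} (P : PTensor A A) (a : A) : P -> P :=
  epsilon (inhabits (fun t : P => t))
    (fun L => bounded_linear L /\
       forall b c, L (ptens P b c) = ptens P (bmul a b) c).

Definition ract {A : BanachAlgebra} (P : PTensor A A) (a : A) : P -> P :=
  epsilon (inhabits (fun t : P => t))
    (fun L => bounded_linear L /\
       forall b c, L (ptens P b c) = ptens P b (bmul c a)).

Definition ppi {A : BanachAlgebra} (P : PTensor A A) : P -> A :=
  epsilon (inhabits (fun _ : P => @bzero A))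
    (fun L => bounded_linear L /\
       forall b c, L (ptens P b c) = bmul b c).

Definition is_character {A : BanachAlgebra} (phi : A -> Cplx) : Prop :=
  (forall x y, phi (badd x y) = Cadd (phi x) (phi y)) /\
  (forall a x, phi (bscal a x) = Cmul a (phi x)) /\
  (forall x y, phi (bmul x y) = Cmul (phi x) (phi y)) /\
  (exists x, phi x <> C0).

Definition directed {D : Type} (le : D -> D -> Prop) : Prop :=
  inhabited D /\ (forall a, le a a) /\
  (forall a b c, le a b -> le b c -> le a c) /\
  (forall a b, exists c, le a c /\ le b c).

Definition net_to0 {D : Type} (le : D -> D -> Prop) (f : D -> R) : Prop :=
  forall eps, 0 < eps -> exists a0, forall a, le a0 a -> Rabs (f a) < eps.

Definition approx_left_biproj {A : BanachAlgebra} (P : PTensor A A)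
    (phi : A -> Cplx) : Prop :=
  exists (D : Type) (le : D -> D -> Prop) (rho : D -> A -> P),
    directed le /\
    (forall i, bounded_linear (rho i)) /\
    (forall a x, net_to0 le
       (fun i => bnorm (bsub (lact P a (rho i x)) (rho i (bmul a x))))) /\
    (forall a x, net_to0 le
       (fun i => bnorm (bsub (rho i (bmul x a)) (bscal (phi a) (rho i x))))) /\
    (forall x, net_to0 le
       (fun i => Cnorm (Csub (phi (ppi P (rho i x))) (phi x)))).

Definition closed_ideal {A : BanachAlgebra} (I : A -> Prop) : Prop :=
  I bzero /\
  (forall x y, I x -> I y -> I (badd x y)) /\
  (forall a x, I x -> I (bscal a x)) /\
  (forall a x, I x -> I (bmul a x)) /\
  (forall a x, I x -> I (bmul x a)) /\
  (forall (u : nat -> A) l, (forall n, I (u n)) -> seq_converges u l -> I l).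

(* j : B -> A presents B as the Banach algebra I (with the restricted
   operations and norm): j is an isometric algebra homomorphism onto I. *)
Definition presents_ideal {A B : BanachAlgebra} (I : A -> Prop) (j : B -> A) : Prop :=
  is_linear j /\
  (forall x y, j (bmul x y) = bmul (j x) (j y)) /\
  (forall x, bnorm (j x) = bnorm x) /\
  (forall y, I y <-> exists x, j x = y).

From Pilot Require Import Defs.
From Stdlib Require Import Reals ClassicalEpsilon Lra Lia.
Open Scope R_scope.
Set Implicit Arguments.

(** Pick [x0] in [I] with [phi x0 = 1] and let [R a = a x0], a bounded map from
    [A] into [I] which is a left [A]-module map.  Then [(R (x) R) o rho_i],
    restricted to [I], is a net for [I]: the module conditions are transported
    because [R] commutes with left multiplication, and the diagonal condition
    because [phi (a x0 c x0) = phi (a c)].  The last identity only holds on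
    elementary tensors; it extends to all of [I (x)_p I] because characters are
    automatically continuous, [|phi x| <= ||x||], which in turn comes from the
    contraction principle. *)

Section BanachSpaceFacts.
Context {E : BanachSpace}.
Implicit Types x y z : E.

Lemma badd_0_r x : badd x bzero = x.
Proof. rewrite badd_comm; apply badd_0. Qed.

Lemma badd_opp_l x : badd (bopp x) x = bzero.
Proof. rewrite badd_comm; apply badd_opp. Qed.

Lemma badd_reg_l z x y : badd z x = badd z y -> x = y.
Proof.
  intro H.
  rewrite <- (badd_0 E x), <- (badd_0 E y), <- (badd_opp_l z), <- !badd_assoc, H.
  reflexivity.
Qed.

Lemma bscal_0_l x : bscal C0 x = bzero.
Proof.
  apply eq_sym, (badd_reg_l (bscal C0 x)).
  rewrite badd_0_r, <- bscal_adds. f_equal. unfold Cadd, C0; simpl; f_equal; ring.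
Qed.

Lemma bopp_bscal x : bopp x = bscal (mkC (-1) 0) x.
Proof.
  apply (badd_reg_l x). rewrite badd_opp. rewrite <- (bscal_1 E x) at 1.
  rewrite <- bscal_adds, <- (bscal_0_l x). f_equal.
  unfold Cadd, Defs.C1, C0; simpl; f_equal; ring.
Qed.

Lemma bnorm_opp x : bnorm (bopp x) = bnorm x.
Proof.
  rewrite bopp_bscal, bnorm_scal. unfold Cnorm; simpl.
  replace (-1 * -1 + 0 * 0) with 1 by ring. rewrite sqrt_1; ring.
Qed.

Lemma bnorm_0 : bnorm (@bzero E) = 0.
Proof.
  rewrite <- (bscal_0_l bzero), bnorm_scal. unfold Cnorm, C0; simpl.
  replace (0 * 0 + 0 * 0) with 0 by ring. rewrite sqrt_0; ring.
Qed.

Lemma bnorm_nonneg x : 0 <= bnorm x.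
Proof.
  pose proof (bnorm_triangle E x (bopp x)) as H.
  rewrite badd_opp, bnorm_0, bnorm_opp in H. lra.
Qed.

Lemma bopp_involutive x : bopp (bopp x) = x.
Proof. apply (badd_reg_l (bopp x)). now rewrite badd_opp, badd_opp_l. Qed.

Lemma bopp_badd x y : bopp (badd x y) = badd (bopp x) (bopp y).
Proof.
  apply (badd_reg_l (badd x y)). rewrite badd_opp, <- badd_assoc,
    (badd_comm _ (bopp x)), (badd_assoc _ y), badd_opp, badd_0, badd_opp.
  reflexivity.
Qed.

Lemma bsub_diag x : bsub x x = bzero.
Proof. apply badd_opp. Qed.

Lemma bsub_eq0 x y : bsub x y = bzero -> x = y.
Proof.
  unfold bsub; intro H.
  rewrite <- (badd_0_r x), <- (badd_opp_l y), badd_assoc, H, badd_0. reflexivity.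
Qed.

Lemma bsub_badd_l z x y : bsub (badd z x) (badd z y) = bsub x y.
Proof.
  unfold bsub. rewrite bopp_badd, badd_assoc, (badd_comm _ z x), <- (badd_assoc _ x),
    badd_opp, badd_0_r.
  reflexivity.
Qed.

Lemma bnorm_bsub_sym x y : bnorm (bsub x y) = bnorm (bsub y x).
Proof.
  replace (bsub y x) with (bopp (bsub x y)) by
    (unfold bsub; rewrite bopp_badd, bopp_involutive, badd_comm; reflexivity).
  symmetry; apply bnorm_opp.
Qed.

Lemma bnorm_bsub_triangle x y z : bnorm (bsub x z) <= bnorm (bsub x y) + bnorm (bsub y z).
Proof.
  replace (bsub x z) with (badd (bsub x y) (bsub y z)); [apply bnorm_triangle|].
  unfold bsub. rewrite <- badd_assoc, (badd_assoc _ (bopp y)), badd_opp_l, badd_0.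
  reflexivity.
Qed.

End BanachSpaceFacts.

Lemma Cmul_1r z : Cmul z Defs.C1 = z.
Proof. destruct z; unfold Cmul, Defs.C1; simpl; f_equal; ring. Qed.

Lemma Cnorm_mul z w : Cnorm (Cmul z w) = Cnorm z * Cnorm w.
Proof.
  destruct z as [a b], w as [c d]; unfold Cnorm, Cmul; simpl.
  rewrite <- sqrt_mult by nra. f_equal; ring.
Qed.

Lemma Cnorm_nonneg z : 0 <= Cnorm z.
Proof. apply sqrt_pos. Qed.

Lemma Cnorm_C1 : Cnorm Defs.C1 = 1.
Proof. unfold Cnorm, Defs.C1; simpl. replace (1 * 1 + 0 * 0) with 1 by ring. apply sqrt_1. Qed.

Lemma Cnorm_C0 : Cnorm C0 = 0.
Proof. unfold Cnorm, C0; simpl. replace (0 * 0 + 0 * 0) with 0 by ring. apply sqrt_0. Qed.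

Definition Cinv (z : Cplx) : Cplx :=
  mkC (Cre z / (Cre z * Cre z + Cim z * Cim z)) (- Cim z / (Cre z * Cre z + Cim z * Cim z)).

Lemma Cinv_l z : z <> C0 -> Cmul (Cinv z) z = Defs.C1.
Proof.
  destruct z as [a b]; intro Hz. unfold Cinv, Cmul, Defs.C1; simpl.
  assert (a * a + b * b <> 0).
  { intro H0. apply Hz. assert (a = 0) by nra. assert (b = 0) by nra. subst. reflexivity. }
  f_equal; field; assumption.
Qed.

Lemma bounded_linear_bound (E F : BanachSpace) (f : E -> F) :
  bounded_linear f -> exists M, 0 <= M /\ forall x, bnorm (f x) <= M * bnorm x.
Proof.
  intros [_ [M HM]]. exists (Rabs M); split; [apply Rabs_pos|].
  intro x. eapply Rle_trans; [apply HM|].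
  apply Rmult_le_compat_r; [apply bnorm_nonneg | apply Rle_abs].
Qed.

Section LinearMaps.
Context {E F G : BanachSpace}.

Lemma linear_opp (f : E -> F) x : is_linear f -> f (bopp x) = bopp (f x).
Proof. intros [_ Hs]. rewrite !bopp_bscal, Hs. reflexivity. Qed.

Lemma linear_sub (f : E -> F) x y : is_linear f -> f (bsub x y) = bsub (f x) (f y).
Proof. intros Hf. unfold bsub. rewrite (proj1 Hf), linear_opp; auto. Qed.

Lemma linear_id : is_linear (fun x : E => x).
Proof. split; reflexivity. Qed.

Lemma linear_comp (f : E -> F) (g : F -> G) :
  is_linear f -> is_linear g -> is_linear (fun x => g (f x)).
Proof.
  intros [Fa Fs] [Ga Gs]; split; intros; [rewrite Fa, Ga | rewrite Fs, Gs]; reflexivity.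
Qed.

Lemma bounded_linear_comp (f : E -> F) (g : F -> G) :
  bounded_linear f -> bounded_linear g -> bounded_linear (fun x => g (f x)).
Proof.
  intros Hf Hg. split; [apply linear_comp; [apply Hf | apply Hg]|].
  destruct (bounded_linear_bound Hf) as [Mf [_ Hfb]].
  destruct (bounded_linear_bound Hg) as [Mg [HMg Hgb]].
  exists (Mg * Mf). intro x. eapply Rle_trans; [apply Hgb|].
  rewrite Rmult_assoc. apply Rmult_le_compat_l; auto.
Qed.

Lemma isometry_inj (j : E -> F) :
  is_linear j -> (forall x, bnorm (j x) = bnorm x) -> forall u v, j u = j v -> u = v.
Proof.
  intros Hj Hn u v Huv. apply bsub_eq0, bnorm_eq0.
  rewrite <- Hn, (linear_sub _ _ Hj), Huv, bsub_diag. apply bnorm_0.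
Qed.

Lemma isometry_bounded_linear (j : E -> F) :
  is_linear j -> (forall x, bnorm (j x) = bnorm x) -> bounded_linear j.
Proof. intros Hj Hn. split; [exact Hj | exists 1; intro x; rewrite Hn; lra]. Qed.

End LinearMaps.

Section AlgebraFacts.
Context {A : BanachAlgebra}.

Lemma bmul_linear_l (z : A) : is_linear (fun y => bmul z y).
Proof. split; intros; [apply bmul_addr | apply bmul_scalr]. Qed.

Lemma bmul_linear_r (z : A) : is_linear (fun y => bmul y z).
Proof. split; intros; [apply bmul_addl | apply bmul_scall]. Qed.

Lemma bmul_bsub_r (z x y : A) : bmul z (bsub x y) = bsub (bmul z x) (bmul z y).
Proof. apply (linear_sub x y (bmul_linear_l z)). Qed.

End AlgebraFacts.

Lemma net_to0_dominated (D : Type) (le : D -> D -> Prop) (f g : D -> R) (M : R) :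
  0 <= M -> net_to0 le f -> (forall i, Rabs (g i) <= M * Rabs (f i)) -> net_to0 le g.
Proof.
  intros HM Hf Hg eps Heps.
  destruct (Hf (eps / (M + 1))) as [i0 Hi0]; [apply Rdiv_lt_0_compat; lra|].
  exists i0; intros i Hi. specialize (Hi0 i Hi). specialize (Hg i).
  assert (Rabs (f i) * (M + 1) < eps).
  { apply (Rmult_lt_compat_r (M + 1)) in Hi0; [|lra].
    unfold Rdiv in Hi0. rewrite Rmult_assoc, Rinv_l, Rmult_1_r in Hi0 by lra. exact Hi0. }
  pose proof (Rabs_pos (f i)). nra.
Qed.

Section ContractionFixpoint.
Variables (E : BanachSpace) (f : E -> E) (q : R).
Hypotheses (q_ge0 : 0 <= q) (q_lt1 : q < 1).
Hypothesis f_contract : forall x y, bnorm (bsub (f x) (f y)) <= q * bnorm (bsub x y).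

Let s (n : nat) : E := Nat.iter n f bzero.
Let d0 : R := bnorm (bsub (s 1) (s 0)).

Lemma iter_step_le n : bnorm (bsub (s (S n)) (s n)) <= q ^ n * d0.
Proof.
  induction n as [|n IH]; simpl pow.
  - rewrite Rmult_1_l. apply Rle_refl.
  - apply Rle_trans with (q * bnorm (bsub (s (S n)) (s n))); [apply f_contract|].
    rewrite Rmult_assoc. apply Rmult_le_compat_l; assumption.
Qed.

Lemma iter_tail_le n k : bnorm (bsub (s (n + k)) (s n)) <= d0 / (1 - q) * q ^ n.
Proof.
  assert (Hd0 : 0 <= d0) by apply bnorm_nonneg.
  assert (Hgeom : bnorm (bsub (s (n + k)) (s n)) <= d0 * q ^ n * (1 - q ^ k) / (1 - q)).
  { induction k as [|k IH].
    - rewrite Nat.add_0_r, bsub_diag, bnorm_0. simpl. unfold Rdiv.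
      replace (1 - 1) with 0 by ring. lra.
    - eapply Rle_trans; [apply (bnorm_bsub_triangle _ (s (n + k)))|].
      rewrite Nat.add_succ_r.
      eapply Rle_trans; [apply Rplus_le_compat; [apply iter_step_le | apply IH]|].
      rewrite pow_add. right. simpl. field. lra. }
  eapply Rle_trans; [exact Hgeom|].
  assert (0 <= q ^ k) by (apply pow_le; lra).
  assert (0 <= q ^ n) by (apply pow_le; lra).
  assert (0 < / (1 - q)) by (apply Rinv_0_lt_compat; lra).
  unfold Rdiv. replace (d0 * / (1 - q) * q ^ n) with (d0 * q ^ n * 1 * / (1 - q)) by ring.
  apply Rmult_le_compat_r; [lra|].
  apply Rmult_le_compat_l; [apply Rmult_le_pos; assumption | lra].
Qed.

Lemma iter_converges : exists l, seq_converges s l.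
Proof.
  apply bcomplete. intros eps Heps.
  set (K := 2 * (d0 / (1 - q))).
  assert (HK : 0 <= K).
  { unfold K, Rdiv. apply Rmult_le_pos; [lra|]. apply Rmult_le_pos; [apply bnorm_nonneg|].
    left; apply Rinv_0_lt_compat; lra. }
  destruct (pow_lt_1_zero q) with (eps / (K + 1)) as [N HN];
    [rewrite Rabs_pos_eq; lra | apply Rdiv_lt_0_compat; lra|].
  specialize (HN N (le_n _)). rewrite Rabs_pos_eq in HN by (apply pow_le; lra).
  assert (HqN : q ^ N * (K + 1) < eps).
  { apply (Rmult_lt_compat_r (K + 1)) in HN; [|lra].
    unfold Rdiv in HN. rewrite Rmult_assoc, Rinv_l, Rmult_1_r in HN by lra. exact HN. }
  assert (0 <= q ^ N) by (apply pow_le; lra).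
  exists N. intros m n Hm Hn.
  replace m with (N + (m - N))%nat by lia. replace n with (N + (n - N))%nat by lia.
  eapply Rle_lt_trans; [apply (bnorm_bsub_triangle _ (s N))|].
  rewrite (bnorm_bsub_sym (s N)).
  pose proof (iter_tail_le N (m - N)). pose proof (iter_tail_le N (n - N)).
  unfold K in HqN. unfold bsub in *. nra.
Qed.

Theorem contraction_fixpoint : exists y, f y = y.
Proof.
  destruct iter_converges as [y Hy]. exists y.
  apply bsub_eq0, bnorm_eq0.
  destruct (Rle_lt_or_eq_dec _ _ (bnorm_nonneg (bsub (f y) y))) as [Hpos|]; [exfalso|auto].
  destruct (Hy (bnorm (bsub (f y) y) / 2)) as [N HN]; [lra|].
  pose proof (HN N (le_n _)) as HyN. pose proof (HN (S N) (le_S _ _ (le_n _))) as HySN.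
  assert (Hf : bnorm (bsub (f y) (s (S N))) <= q * bnorm (bsub (s N) y)).
  { rewrite bnorm_bsub_sym. apply f_contract. }
  pose proof (bnorm_bsub_triangle (f y) (s (S N)) y).
  pose proof (bnorm_nonneg (bsub (s N) y)).
  nra.
Qed.

End ContractionFixpoint.

Section Characters.
Variables (A : BanachAlgebra) (phi : A -> Cplx).
Hypothesis phi_char : is_character phi.

Lemma character_normalize x : phi x <> C0 -> phi (bscal (Cinv (phi x)) x) = Defs.C1.
Proof. intro Hx. destruct phi_char as [_ [Ps _]]. rewrite Ps. apply Cinv_l, Hx. Qed.

(* If [|phi x| > ||x||], then [z = x / phi x] has [||z|| < 1] and [phi z = 1],
   and the fixed point [y = z + z y] of a contraction gives [phi y = 1 + phi y]. *)
Lemma character_norm_le x : Cnorm (phi x) <= bnorm x.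
Proof.
  destruct (Rle_lt_dec (Cnorm (phi x)) (bnorm x)) as [|Hlt]; [assumption|exfalso].
  pose proof phi_char as [Pa [_ [Pm _]]].
  assert (Hx : phi x <> C0).
  { intro H0. rewrite H0, Cnorm_C0 in Hlt. pose proof (bnorm_nonneg x). lra. }
  set (z := bscal (Cinv (phi x)) x).
  assert (Hz : phi z = Defs.C1) by (apply character_normalize, Hx).
  assert (Hz1 : bnorm z < 1).
  { unfold z. rewrite bnorm_scal.
    pose proof (Cnorm_mul (Cinv (phi x)) (phi x)) as Hinv.
    rewrite Cinv_l, Cnorm_C1 in Hinv by assumption.
    pose proof (Cnorm_nonneg (Cinv (phi x))). pose proof (bnorm_nonneg x). nra. }
  destruct (@contraction_fixpoint A (fun y => badd z (bmul z y)) (bnorm z)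
              (bnorm_nonneg z) Hz1) as [y Hy].
  { intros u v. rewrite bsub_badd_l, <- bmul_bsub_r. apply bnorm_mul. }
  apply (f_equal phi) in Hy. rewrite Pa, Pm, Hz in Hy.
  apply (f_equal Cre) in Hy. destruct (phi y). simpl in Hy. lra.
Qed.

Lemma character_bscal_bounded (E : BanachSpace) (L : E -> A) (e : A) :
  bounded_linear L -> bounded_linear (fun t => bscal (phi (L t)) e).
Proof.
  intros HL. destruct (bounded_linear_bound HL) as [M [HM HLb]].
  destruct HL as [[La Ls] _]. destruct phi_char as [Pa [Ps _]].
  split; [split|].
  - intros u v. rewrite La, Pa. apply bscal_adds.
  - intros c u. rewrite Ls, Ps, bscal_assoc. reflexivity.
  - exists (M * bnorm e). intro t. rewrite bnorm_scal.
    pose proof (character_norm_le (L t)). pose proof (HLb t).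
    pose proof (bnorm_nonneg e). pose proof (bnorm_nonneg t).
    pose proof (Cnorm_nonneg (phi (L t))). nra.
Qed.

Lemma character_comp (B : BanachAlgebra) (j : B -> A) :
  is_linear j -> (forall x y, j (bmul x y) = bmul (j x) (j y)) ->
  (exists x, phi (j x) <> C0) -> is_character (fun x => phi (j x)).
Proof.
  intros [ja js] jmul Hne. destruct phi_char as [Pa [Ps [Pm _]]].
  split; [|split; [|split]]; [intros x y | intros c x | intros x y | exact Hne].
  - rewrite ja. apply Pa.
  - rewrite js. apply Ps.
  - rewrite jmul. apply Pm.
Qed.

End Characters.

Lemma ptens_lift (E F G : BanachSpace) (P : PTensor E F) (b : E -> F -> G) (M : R) :
  0 <= M -> is_bilinear b -> (forall x y, bnorm (b x y) <= M * bnorm x * bnorm y) ->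
  exists L : P -> G, bounded_linear L /\ forall x y, L (ptens P x y) = b x y.
Proof.
  intros HM Hb Hbnd. destruct (@ptens_univ _ _ P G b M HM Hb Hbnd) as [L [HL [HLb HLe]]].
  exists L. split; [split; [exact HL | exists M; exact HLb] | exact HLe].
Qed.

Lemma ptens_bilinear_comp (E F G H : BanachSpace) (P : PTensor G H) (f : E -> G) (g : F -> H) :
  is_linear f -> is_linear g -> is_bilinear (fun x y => ptens P (f x) (g y)).
Proof.
  intros Hf Hg. destruct (ptens_bilin P) as [Hl Hr]. split; intro y.
  - apply (linear_comp Hf (Hl (g y))).
  - apply (linear_comp Hg (Hr (f y))).
Qed.

Lemma ptens_map (E F G H : BanachSpace) (P : PTensor E F) (Q : PTensor G H)
    (f : E -> G) (g : F -> H) :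
  bounded_linear f -> bounded_linear g ->
  exists T : P -> Q, bounded_linear T /\ forall x y, T (ptens P x y) = ptens Q (f x) (g y).
Proof.
  intros Hf Hg.
  destruct (bounded_linear_bound Hf) as [Mf [HMf Hfb]].
  destruct (bounded_linear_bound Hg) as [Mg [HMg Hgb]].
  apply (ptens_lift P (M := Mf * Mg)).
  - apply Rmult_le_pos; assumption.
  - apply ptens_bilinear_comp; [apply Hf | apply Hg].
  - intros x y. eapply Rle_trans; [apply ptens_norm|].
    apply Rle_trans with ((Mf * bnorm x) * (Mg * bnorm y)); [|right; ring].
    apply Rmult_le_compat; auto using bnorm_nonneg.
Qed.

Lemma lact_spec (A : BanachAlgebra) (P : PTensor A A) (a : A) :
  bounded_linear (lact P a) /\ forall b c, lact P a (ptens P b c) = ptens P (bmul a b) c.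
Proof.
  unfold lact. apply epsilon_spec, (ptens_lift P (M := bnorm a)).
  - apply bnorm_nonneg.
  - apply (ptens_bilinear_comp P (bmul_linear_l a) (linear_id (E := A))).
  - intros x y. eapply Rle_trans; [apply ptens_norm|].
    apply Rmult_le_compat_r; [apply bnorm_nonneg | apply bnorm_mul].
Qed.

Lemma ppi_spec (A : BanachAlgebra) (P : PTensor A A) :
  bounded_linear (ppi P) /\ forall b c, ppi P (ptens P b c) = bmul b c.
Proof.
  unfold ppi. apply epsilon_spec, (ptens_lift P (M := 1)).
  - lra.
  - split; intro y; [apply bmul_linear_r | apply bmul_linear_l].
  - intros x y. rewrite Rmult_1_l. apply bnorm_mul.
Qed.

(* A map out of a projective tensor product is determined by its values on
   elementary tensors only among bounded maps; [phi o L] is bounded once it is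
   read as [t |-> phi (L t) e] with [phi e = 1]. *)
Lemma ptens_uniq_character (E F : BanachSpace) (P : PTensor E F) (A : BanachAlgebra)
    (phi : A -> Cplx) (L1 L2 : P -> A) :
  is_character phi -> bounded_linear L1 -> bounded_linear L2 ->
  (forall x y, phi (L1 (ptens P x y)) = phi (L2 (ptens P x y))) ->
  forall t, phi (L1 t) = phi (L2 t).
Proof.
  intros Hphi HL1 HL2 Helt t.
  pose proof Hphi as [_ [Ps [_ [x1 Hx1]]]].
  set (e := bscal (Cinv (phi x1)) x1).
  assert (He : phi e = Defs.C1) by (apply character_normalize; assumption).
  assert (Heq : bscal (phi (L1 t)) e = bscal (phi (L2 t)) e).
  { apply (@ptens_uniq _ _ P A (fun t => bscal (phi (L1 t)) e) (fun t => bscal (phi (L2 t)) e));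
      [apply character_bscal_bounded; assumption.. |].
    intros x y. now rewrite Helt. }
  apply (f_equal phi) in Heq. rewrite !Ps, He, !Cmul_1r in Heq. exact Heq.
Qed.

Lemma approx_left_biproj_transfer (A B : BanachAlgebra) (PA : PTensor A A) (PB : PTensor B B)
    (phi : A -> Cplx) (j : B -> A) (T : PA -> PB) :
  bounded_linear j -> (forall x y, j (bmul x y) = bmul (j x) (j y)) -> bounded_linear T ->
  (forall b t, lact PB b (T t) = T (lact PA (j b) t)) ->
  (forall t, phi (j (ppi PB (T t))) = phi (ppi PA t)) ->
  approx_left_biproj PA phi -> approx_left_biproj PB (fun x => phi (j x)).
Proof.
  intros Hj jmul HT Hlact Hppi [D [le [rho [Hdir [Hrho [HL [HR HP]]]]]]].
  destruct (bounded_linear_bound HT) as [M [HM HTb]].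
  pose proof (proj1 HT) as Tlin.
  exists D, le, (fun i y => T (rho i (j y))).
  split; [exact Hdir|]. split; [|split; [|split]].
  - intro i. exact (bounded_linear_comp (bounded_linear_comp Hj (Hrho i)) HT).
  - intros b y. apply (net_to0_dominated _ HM (HL (j b) (j y))). intro i. cbv beta.
    rewrite Hlact, jmul, <- (linear_sub _ _ Tlin), !Rabs_pos_eq by apply bnorm_nonneg.
    apply HTb.
  - intros b y. apply (net_to0_dominated _ HM (HR (j b) (j y))). intro i. cbv beta.
    rewrite jmul, <- (proj2 Tlin), <- (linear_sub _ _ Tlin), !Rabs_pos_eq by apply bnorm_nonneg.
    apply HTb.
  - intro y. apply (net_to0_dominated _ Rle_0_1 (HP (j y))). intro i. cbv beta.
    rewrite Hppi. lra.
Qed.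

Section IdealRightMultiplication.
Variables (A B : BanachAlgebra) (I : A -> Prop) (j : B -> A) (x0 : A).
Hypothesis j_presents : presents_ideal I j.
Hypothesis I_lmul : forall a x, I x -> I (bmul a x).
Hypothesis I_x0 : I x0.

Definition ideal_rmul (a : A) : B := epsilon (inhabits bzero) (fun y => j y = bmul a x0).

Lemma ideal_rmulE a : j (ideal_rmul a) = bmul a x0.
Proof.
  unfold ideal_rmul. apply epsilon_spec, (proj2 (proj2 (proj2 j_presents))), I_lmul, I_x0.
Qed.

Let j_inj : forall u v, j u = j v -> u = v.
Proof.
  destruct j_presents as [jlin [_ [jnorm _]]]. exact (isometry_inj jlin jnorm).
Qed.

Lemma ideal_rmul_bounded : bounded_linear ideal_rmul.
Proof.
  split; [split; intros; apply j_inj|].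
  - rewrite (proj1 (proj1 j_presents)), !ideal_rmulE. apply bmul_addl.
  - rewrite (proj2 (proj1 j_presents)), !ideal_rmulE. apply bmul_scall.
  - exists (bnorm x0). intro a. destruct j_presents as [_ [_ [jnorm _]]].
    rewrite <- jnorm, ideal_rmulE, Rmult_comm. apply bnorm_mul.
Qed.

Lemma ideal_rmul_lmul b a : ideal_rmul (bmul (j b) a) = bmul b (ideal_rmul a).
Proof.
  apply j_inj. destruct j_presents as [_ [jmul _]].
  rewrite jmul, !ideal_rmulE. symmetry; apply bmul_assoc.
Qed.

Variables (PA : PTensor A A) (PB : PTensor B B) (T : PA -> PB).
Hypothesis T_bounded : bounded_linear T.
Hypothesis T_ptens : forall x y, T (ptens PA x y) = ptens PB (ideal_rmul x) (ideal_rmul y).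

Lemma lact_ideal_rmul_tensor b t : lact PB b (T t) = T (lact PA (j b) t).
Proof.
  destruct (lact_spec _ PB b) as [LB LBe]. destruct (lact_spec _ PA (j b)) as [LA LAe].
  apply (@ptens_uniq _ _ PA PB (fun t => lact PB b (T t)) (fun t => T (lact PA (j b) t))).
  - exact (bounded_linear_comp T_bounded LB).
  - exact (bounded_linear_comp LA T_bounded).
  - intros x y. rewrite T_ptens, LBe, LAe, T_ptens, ideal_rmul_lmul. reflexivity.
Qed.

Lemma ppi_ideal_rmul_tensor (phi : A -> Cplx) :
  is_character phi -> phi x0 = Defs.C1 ->
  forall t, phi (j (ppi PB (T t))) = phi (ppi PA t).
Proof.
  intros Hphi Hx0. pose proof Hphi as [_ [_ [Pm _]]].
  destruct j_presents as [jlin [jmul [jnorm _]]].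
  destruct (ppi_spec _ PB) as [PiB PiBe]. destruct (ppi_spec _ PA) as [PiA PiAe].
  apply (ptens_uniq_character PA Hphi).
  - apply (bounded_linear_comp (bounded_linear_comp T_bounded PiB)).
    exact (isometry_bounded_linear jlin jnorm).
  - exact PiA.
  - intros x y. rewrite T_ptens, PiBe, PiAe, jmul, !ideal_rmulE, !Pm, Hx0, !Cmul_1r.
    reflexivity.
Qed.

End IdealRightMultiplication.

Theorem proposition2p8 (A : BanachAlgebra) (PA : PTensor A A) (phi : A -> Cplx)
  (I : A -> Prop) (B : BanachAlgebra) (PB : PTensor B B) (j : B -> A) :
  is_character phi ->
  closed_ideal I ->
  presents_ideal I j ->
  (exists x, I x /\ phi x <> C0) ->
  approx_left_biproj PA phi ->
  is_character (fun x => phi (j x)) /\ approx_left_biproj PB (fun x => phi (j x)).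
Proof.
  intros Hphi HI Hj [x1 [Ix1 Hx1]] Hbiproj.
  pose proof Hj as [jlin [jmul [jnorm jrng]]].
  pose proof HI as [_ [_ [I_scal [I_lmul _]]]].
  split.
  { apply (character_comp Hphi B jlin jmul).
    destruct (proj1 (jrng x1) Ix1) as [y1 Hy1]. exists y1. now rewrite Hy1. }
  set (x0 := bscal (Cinv (phi x1)) x1).
  assert (Ix0 : I x0) by (apply I_scal, Ix1).
  assert (Hx0 : phi x0 = Defs.C1) by (apply character_normalize; assumption).
  pose proof (ideal_rmul_bounded _ Hj I_lmul Ix0) as HR.
  destruct (ptens_map PA PB HR HR) as [T [HT HTe]].
  apply (approx_left_biproj_transfer B PB (T := T)); auto.
  - exact (isometry_bounded_linear jlin jnorm).
  - exact (lact_ideal_rmul_tensor _ Hj I_lmul Ix0 PA PB HT HTe).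
  - exact (ppi_ideal_rmul_tensor _ Hj I_lmul Ix0 PA PB HT HTe Hphi Hx0).
Qed.
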